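(* For every $d\ge 3$, the group $G_d$ is non-contracting: there is no finite subset $S\subseteq G_d$ such that for every $g\in G_d$ there exists $k\in\mathbb N$ with $g|_u\in S$ for all vertices $u$ with $|u|\ge k$.
   Context: Let $d\ge 3$, $X=\{1,\dots,d\}$, $X^*$ the free monoid on $X$, and $T$ the $d$-regular rooted tree with vertex set $X^*$. $\mathrm{Aut}(T)$ is the group of root-preserving tree automorphisms, with product written left-to-right: $(gh)(u)=h(g(u))$. For $g\in\mathrm{Aut}(T)$ and $u\in X^*$ the section $g|_u$ is defined by $g(uv)=g(u)\,g|_u(v)$. We write $g=(g|_1,\dots,g|_d)\lambda_g$, where $\lambda_g\in S_d$ is the permutation induced by $g$ on $X$, and $e$ is the identity. $\overline{j}\in\{1,\dots,d\}$ denotes $j$ mod $d$. The group $G_d\le \mathrm{Aut}(T)$ is generated by $A=\{a_1,\dots,a_d\}$, where $a_i$ acts on the first level as the transposition $(i\ \overline{i+1})$, with sections $a_i|_i=a_i$, $a_i|_{\overline{i+1}}=a_{\overline{i+1}}$, and $a_i|_x=e$ otherwise (e.g. $a_1=(a_1,a_2,e,\dots,e)(1\,2)$, $a_d=(a_1,e,\dots,e,a_d)(d\ 1)$). *)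

From mathcomp Require Import all_boot.
Set Implicit Arguments. Unset Strict Implicit. Unset Printing Implicit Defensive.

(* Vertices of the d-regular rooted tree: words over X = 'I_d
   (letter j : 'I_d stands for j+1 in {1,...,d}); the cyclic successor
   "j+1 mod d" is ordS. *)
Definition vertex (d : nat) := seq 'I_d.

(* Action of the generator a_i (inv = false) or of its inverse a_i^{-1}
   (inv = true) on a vertex, following
   a_i = (sections a_i at i, a_{i+1} at i+1, e elsewhere) (i i+1). *)
Fixpoint act_gen (d : nat) (i : 'I_d) (inv : bool) (w : vertex d) : vertex d :=
  match w with
  | [::] => [::]
  | x :: w' =>
    if ~~ inv then
      if x == i then ordS i :: act_gen i inv w'
      else if x == ordS i then i :: act_gen (ordS i) inv w'
      else x :: w'
    else
      if x == ordS i then i :: act_gen i inv w'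
      else if x == i then ordS i :: act_gen (ordS i) inv w'
      else x :: w'
  end.

(* Elements of G_d are represented by words in the generators and their
   inverses; product written left-to-right: (gh)(u) = h(g(u)), so the
   first letter acts first. *)
Definition gword (d : nat) := seq ('I_d * bool).

Definition eval (d : nat) (g : gword d) (w : vertex d) : vertex d :=
  foldl (fun w s => act_gen s.1 s.2 w) w g.

(* Section of an automorphism f at u: f(uv) = f(u) f|_u(v). *)
Definition section (d : nat) (f : vertex d -> vertex d) (u : vertex d)
  : vertex d -> vertex d :=
  fun v => drop (size u) (f (u ++ v)).

From mathcomp Require Import all_boot zify zmodp.
From Stdlib Require Import Classical.
Set Implicit Arguments. Unset Strict Implicit. Unset Printing Implicit Defensive.

(* Let U_s = a_s a_(s+1) ... a_(s-1) be the product of all generators in cyclic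
   order (indices mod d).  U_s fixes the letter s with section U_s, so every power
   U_s^p reappears as the section of U_s^p at arbitrarily deep vertices s^k; a
   finite S would thus contain a common section of U_s^i and U_s^j for some i < j,
   and U_s would have finite order.  But U_s permutes the other d - 1 letters
   cyclically and (U_s^(d-1))|_(s+1) = D_(s+1), where D_u = a_u a_(u-1) ... a_(u+1);
   in turn D_u fixes u + 1 with section D_(u+1), cycles the letters other than
   u + 1, and (D_u^(d-1))|_u = U_u.  Hence U_s^p = 1 forces (d-1)^2 | p and
   U_(s+2)^(p/(d-1)^2) = 1, and descent on p gives p = 0. *)

Section Words.

Variable d : nat.
Implicit Types (g h : gword d) (x : 'I_d) (u v w : vertex d).

Definition gpow g p : gword d := flatten (nseq p g).

Definition acts_trivially g := forall w, eval g w = w.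

Lemma eval_cat g h w : eval (g ++ h) w = eval h (eval g w).
Proof. by rewrite /eval foldl_cat. Qed.

Lemma eval_cons g s w : eval (s :: g) w = eval g (act_gen s.1 s.2 w).
Proof. by []. Qed.

Lemma eval_root g : eval g [::] = [::].
Proof. by elim: g. Qed.

Lemma gpow1 g : gpow g 1 = g.
Proof. exact: cats0. Qed.

Lemma gpowD g p q : gpow g (p + q) = gpow g p ++ gpow g q.
Proof. by rewrite /gpow nseqD flatten_cat. Qed.

Lemma gpowSr g p : gpow g p.+1 = gpow g p ++ g.
Proof. by rewrite -addn1 gpowD gpow1. Qed.

Lemma gpowM g p q : gpow g (p * q) = gpow (gpow g q) p.
Proof. by elim: p => // p IH; rewrite mulSn gpowD IH. Qed.

Lemma act_genK i b : cancel (@act_gen d i b) (act_gen i (~~ b)).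
Proof.
move=> w; elim: w i => [|y w IH] i //=.
case: b IH => IH; case: (eqVneq y i) => [->{y}|yNi] /=; rewrite ?eqxx ?IH //.
- case: eqP => [iSi|/eqP iNSi] /=; first by rewrite eqxx IH -iSi.
  by rewrite eq_sym (negbTE iNSi) eqxx IH.
- case: (eqVneq y (ordS i)) => [->|yNSi] /=; first by rewrite eqxx IH.
  by rewrite (negbTE yNi) (negbTE yNSi).
- case: (eqVneq y (ordS i)) => [yS|yNSi] /=; last by rewrite (negbTE yNi) (negbTE yNSi).
  by rewrite yS in yNi *; rewrite eq_sym (negbTE yNi) eqxx IH.
Qed.

Lemma eval_inj g : injective (eval g).
Proof. by elim: g => [|s g IH] u v //= /IH; exact: (can_inj (act_genK s.1 s.2)). Qed.

Definition avoids x g := all (fun s => (x != s.1) && (x != ordS s.1)) g.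

Lemma eval_avoids g x v : avoids x g -> eval g (x :: v) = x :: v.
Proof.
elim: g => // s g IH /andP[/andP[xNs xNSs] xg]; rewrite eval_cons.
suff -> : act_gen s.1 s.2 (x :: v) = x :: v by exact: IH.
by case: s.2; rewrite /= (negbTE xNs) (negbTE xNSs).
Qed.

Lemma eval_rev_avoids g x v : avoids x g -> eval (rev g) (x :: v) = x :: v.
Proof. by move=> xg; rewrite eval_avoids // /avoids all_rev. Qed.

Lemma trivial_section g h x :
  (forall w, eval g (x :: w) = x :: eval h w) -> acts_trivially g -> acts_trivially h.
Proof. by move=> gx g1 w; have := g1 (x :: w); rewrite gx => -[]. Qed.

Lemma eval_gpow_fixed g h x :
  (forall w, eval g (x :: w) = x :: eval h w) ->
  forall p w, eval (gpow g p) (x :: w) = x :: eval (gpow h p) w.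
Proof. by move=> gx; elim=> // p IH w; rewrite !eval_cat gx IH. Qed.

Lemma trivial_gpow_cycle g h x m : 0 < m ->
  (forall w, eval (gpow g m) (x :: w) = x :: eval h w) ->
  (forall r, 0 < r < m -> eval (gpow g r) [:: x] != [:: x]) ->
  forall p, acts_trivially (gpow g p) -> m %| p /\ acts_trivially (gpow h (p %/ m)).
Proof.
move=> m_gt0 gmx moves p gp1.
have gqx := eval_gpow_fixed gmx (p %/ m).
have p_mod : p %% m = 0.
  case: (posnP (p %% m)) => // r_gt0; have := gp1 [:: x].
  rewrite {1}(divn_eq p m) gpowD gpowM eval_cat gqx eval_root => /eqP.
  by rewrite (negbTE (moves _ _)) // r_gt0 ltn_pmod.
split; first by apply/eqP.
apply: (trivial_section (x := x)) gp1 => w.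
by rewrite {1}(divn_eq p m) p_mod addn0 gpowM gqx.
Qed.

Lemma pigeonhole (T : eqType) (R : T -> nat -> Prop) (S : seq T) m0 :
  (forall m, m0 <= m -> exists2 y, y \in S & R y m) ->
  exists i j y, [/\ i < j, R y i & R y j].
Proof.
elim: S m0 => [|z S IH] m0 HS; first by have [] := HS m0 (leqnn _).
have [[i [j [ij Ri Rj]]]|twice] := classic (exists i j, [/\ i < j, R z i & R z j]).
  by exists i, j, z.
have [[i [m0i Ri]]|never] := classic (exists i, m0 <= i /\ R z i).
- apply: (IH i.+1) => m im; have [y] := HS m (leq_trans m0i (ltnW im)).
  rewrite in_cons => /predU1P[-> Rm|]; last by exists y.
  by case: twice; exists i, m.
- apply: (IH m0) => m m0m; have [y] := HS m m0m.
  rewrite in_cons => /predU1P[-> Rm|]; last by exists y.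
  by case: never; exists m.
Qed.

Definition contracting_with (S : seq (gword d)) :=
  forall g, exists k, forall u, k <= size u ->
    exists2 s, s \in S & forall v, section (eval g) u v = eval s v.

Lemma section_fixed_letter g x : (forall w, eval g (x :: w) = x :: eval g w) ->
  forall k v, section (eval g) (nseq k x) v = eval g v.
Proof.
move=> gx; elim=> [|k IH] v; first exact: drop0.
by rewrite /section /= gx -[RHS]IH.
Qed.

Lemma not_contracting_with g x :
  (forall w, eval g (x :: w) = x :: eval g w) ->
  (forall p, acts_trivially (gpow g p) -> p = 0) ->
  ~ exists S, contracting_with S.
Proof.
move=> gx g_inf [S HS].
have sections_gpow m : exists2 s, s \in S & forall v, eval (gpow g m) v = eval s v.
  have [k Hk] := HS (gpow g m).
  have [s sS Hs] := Hk (nseq k x) (eq_leq (esym (size_nseq k x))).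
  by exists s => // v; rewrite -Hs section_fixed_letter // => w; exact: eval_gpow_fixed.
have [i [j [s [ij Hi Hj]]]] :=
  @pigeonhole _ (fun s m => forall v, eval (gpow g m) v = eval s v) S 0
    (fun m _ => sections_gpow m).
have /g_inf : acts_trivially (gpow g (j - i)).
  move=> w; apply: (@eval_inj (gpow g i)).
  by rewrite -eval_cat -gpowD subnK ?(ltnW ij) // Hi Hj.
by move/eqP; rewrite subn_eq0 leqNgt ij.
Qed.

End Words.

Section CyclicProducts.

Variable n : nat.
Hypothesis n_gt1 : 1 < n.

(* d = n.+1, so n = d - 1 is the length of the cycles below; letter k is k mod d
   and cyc_down s = a_(s+d) a_(s+d-1) ... a_(s+1) = a_s a_(s-1) ... a_(s+1). *)
Local Notation letter := (@inZp n).

Definition gen k : 'I_n.+1 * bool := (letter k, false).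

Definition ascent s m : gword n.+1 := map gen (iota s m).

Definition cyc_up s := ascent s n.+1.

Definition cyc_down s := rev (ascent s.+1 n.+1).

Lemma letter_period k : letter (k + n.+1) = letter k.
Proof. by apply: val_inj; rewrite /= modnDr. Qed.

Lemma ordS_letter k : ordS (letter k) = letter k.+1.
Proof. by apply: val_inj; rewrite /= -addn1 modnDml addn1. Qed.

Lemma letter_neq x y : x < y < x + n.+1 -> letter x != letter y.
Proof.
move=> /andP[xy yx]; apply/eqP => /(congr1 val) /= /eqP.
rewrite -(subnKC (ltnW xy)) -{1}(addn0 x) eqn_modDl mod0n modn_small; last by lia.
by rewrite eq_sym subn_eq0 leqNgt xy.
Qed.

Lemma ordS_neq (i : 'I_n.+1) : ordS i != i.
Proof. by rewrite -(valZpK i) ordS_letter eq_sym letter_neq //; lia. Qed.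

Lemma eval_gen_hit k w : eval [:: gen k] (letter k :: w) = letter k.+1 :: eval [:: gen k] w.
Proof. by rewrite /= eqxx ordS_letter. Qed.

Lemma eval_gen_hit_succ k w :
  eval [:: gen k] (letter k.+1 :: w) = letter k :: eval [:: gen k.+1] w.
Proof. by rewrite /= -ordS_letter (negbTE (ordS_neq _)) eqxx ordS_letter. Qed.

Lemma ascentS s m : ascent s m.+1 = gen s :: ascent s.+1 m.
Proof. by []. Qed.

Lemma ascentD s m1 m2 : ascent s (m1 + m2) = ascent s m1 ++ ascent (s + m1) m2.
Proof. by rewrite /ascent iotaD map_cat. Qed.

Lemma ascent_split s m t : s <= t <= s + m ->
  ascent s m = ascent s (t - s) ++ ascent t (s + m - t).
Proof.
move=> st; have {1}-> : m = (t - s) + (s + m - t) by lia.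
by rewrite ascentD subnKC //; case/andP: st.
Qed.

Lemma ascent_pick s m t : s <= t < s + m ->
  ascent s m = ascent s (t - s) ++ gen t :: ascent t.+1 (s + m - t.+1).
Proof.
move=> st; rewrite (@ascent_split s m t); last by lia.
by rewrite (_ : s + m - t = (s + m - t.+1).+1); last by lia.
Qed.

Lemma rev_ascent_pick s m t : s <= t < s + m ->
  rev (ascent s m) = rev (ascent t.+1 (s + m - t.+1)) ++ gen t :: rev (ascent s (t - s)).
Proof. by move=> st; rewrite (ascent_pick st) rev_cat rev_cons cat_rcons. Qed.

Lemma avoids_ascent s m x : s + m < x < s + n.+1 -> avoids (letter x) (ascent s m).
Proof.
move=> xm; apply/allP => _ /mapP[k + ->]; rewrite mem_iota => km /=.
by rewrite ordS_letter !(eq_sym (letter x)) !letter_neq //; lia.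
Qed.

Lemma eval_ascent_bottom s m w :
  eval (ascent s m) (letter s :: w) = letter (s + m) :: eval (ascent s m) w.
Proof.
elim: m s w => [|m IH] s w; first by rewrite addn0.
by rewrite ascentS -cat1s !eval_cat eval_gen_hit IH addSnnS.
Qed.

Lemma eval_rev_ascent_top t m w :
  eval (rev (ascent t m)) (letter (t + m) :: w) = letter t :: eval (rev (ascent t.+1 m)) w.
Proof.
elim: m t w => [|m IH] t w; first by rewrite addn0.
by rewrite !ascentS !rev_cons -!cats1 !eval_cat -addSnnS IH eval_gen_hit_succ.
Qed.

Lemma cyc_up_fix s w : eval (cyc_up s) (letter s :: w) = letter s :: eval (cyc_up s) w.
Proof. by rewrite eval_ascent_bottom letter_period. Qed.

Lemma cyc_up_jump s w :
  eval (cyc_up s) (letter s.+1 :: w) = letter (s + n) :: eval [:: gen s.+1; gen s] w.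
Proof.
rewrite /cyc_up (@ascent_pick s _ s); last by lia.
rewrite subnn addnS subSS addKn (@ascent_pick s.+1 _ (s + n)); last by lia.
rewrite -cat1s !eval_cat eval_gen_hit_succ -(letter_period s).
rewrite eval_avoids; last by apply: avoids_ascent; lia.
rewrite addSn addnS subnn eval_gen_hit_succ.
by rewrite -addnS /gen letter_period.
Qed.

Lemma cyc_up_descend s x w : s < x < s + n ->
  eval (cyc_up s) (letter x.+1 :: w) = letter x :: eval [:: gen x.+1] w.
Proof.
move=> sx; rewrite /cyc_up (@ascent_pick s _ x) ?eval_cat; last by lia.
rewrite eval_avoids; last by apply: avoids_ascent; lia.
rewrite -cat1s eval_cat eval_gen_hit_succ -(letter_period x) eval_avoids //.
by apply: avoids_ascent; lia.
Qed.

Lemma cyc_down_fix s w :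
  eval (cyc_down s) (letter s.+1 :: w) = letter s.+1 :: eval (cyc_down s.+1) w.
Proof. by rewrite -{1}(letter_period s.+1) eval_rev_ascent_top. Qed.

Lemma cyc_down_jump s w :
  eval (cyc_down s) (letter s :: w) = letter s.+2 :: eval (ascent s 2) w.
Proof.
rewrite /cyc_down (@rev_ascent_pick s.+1 _ s.+1) ?subnn; last by lia.
rewrite (_ : s.+1 + n.+1 - s.+2 = n); last by lia.
rewrite (@rev_ascent_pick s.+2 _ (s + n.+1)); last by lia.
rewrite (_ : s.+2 + n - (s + n.+1).+1 = 0); last by lia.
rewrite cat0s -cat1s !eval_cat -{1}(letter_period s) eval_gen_hit.
rewrite -addSn eval_rev_avoids; last by apply: avoids_ascent; lia.
by rewrite letter_period eval_gen_hit /gen letter_period.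
Qed.

Lemma cyc_down_climb s x w : s.+1 < x <= s + n ->
  eval (cyc_down s) (letter x :: w) = letter x.+1 :: eval [:: gen x] w.
Proof.
move=> sx; rewrite /cyc_down (@rev_ascent_pick s.+1 _ x) ?eval_cat; last by lia.
rewrite -(letter_period x) eval_rev_avoids; last by apply: avoids_ascent; lia.
rewrite letter_period -cat1s eval_cat eval_gen_hit eval_rev_avoids //.
by apply: avoids_ascent; lia.
Qed.

Lemma cyc_up_orbit s t w : 0 < t <= n ->
  eval (gpow (cyc_up s) t) (letter s.+1 :: w) =
  letter (s + n.+1 - t) :: eval ([:: gen s.+1; gen s] ++ rev (ascent (s + n.+2 - t) t.-1)) w.
Proof.
elim: t => [//|[|t] IH] tn.
  by rewrite gpow1 cyc_up_jump cats0 subn1 addnS.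
rewrite gpowSr eval_cat IH; last by lia.
rewrite (_ : s + n.+1 - t.+1 = (s + n - t.+1).+1); last by lia.
rewrite cyc_up_descend; last by lia.
rewrite (_ : s + n.+1 - t.+2 = s + n - t.+1); last by lia.
rewrite (_ : s + n.+2 - t.+2 = (s + n - t.+1).+1); last by lia.
rewrite /= ascentS rev_cons -cats1 eval_cat.
by rewrite (_ : (s + n - t.+1).+2 = s + n.+2 - t.+1); last by lia.
Qed.

Lemma cyc_up_pow s w :
  eval (gpow (cyc_up s) n) (letter s.+1 :: w) = letter s.+1 :: eval (cyc_down s.+1) w.
Proof.
rewrite cyc_up_orbit; last by lia.
rewrite (_ : s + n.+1 - n = s.+1); last by lia.
rewrite (_ : s + n.+2 - n = s.+2); last by lia.
rewrite /cyc_down [ascent s.+2 n.+1](@ascent_split _ _ (s.+1 + n)); last by lia.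
rewrite (_ : s.+2 + n.+1 - (s.+1 + n) = 2); last by lia.
rewrite (_ : s.+1 + n - s.+2 = n.-1); last by lia.
by rewrite rev_cat /= -addnS addSnnS !letter_period.
Qed.

Lemma cyc_down_orbit s t w : 0 < t <= n ->
  eval (gpow (cyc_down s) t) (letter s :: w) = letter (s + t.+1) :: eval (ascent s t.+1) w.
Proof.
elim: t => [//|[|t] IH] tn; first by rewrite gpow1 cyc_down_jump addn2.
rewrite gpowSr eval_cat IH; last by lia.
rewrite cyc_down_climb; last by lia.
by rewrite -addnS -(addn1 t.+2) ascentD eval_cat.
Qed.

Lemma cyc_down_pow s w :
  eval (gpow (cyc_down s) n) (letter s :: w) = letter s :: eval (cyc_up s) w.
Proof. by rewrite cyc_down_orbit ?letter_period //; lia. Qed.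

Lemma cyc_up_pow_moves s r : 0 < r < n ->
  eval (gpow (cyc_up s) r) [:: letter s.+1] != [:: letter s.+1].
Proof.
move=> rn; rewrite cyc_up_orbit; last by lia.
have : letter s.+1 != letter (s + n.+1 - r) by apply: letter_neq; lia.
by apply: contraNneq => /(congr1 (head (letter 0))) /= ->.
Qed.

Lemma cyc_down_pow_moves s r : 0 < r < n ->
  eval (gpow (cyc_down s) r) [:: letter s] != [:: letter s].
Proof.
move=> rn; rewrite cyc_down_orbit; last by lia.
have : letter s != letter (s + r.+1) by apply: letter_neq; lia.
by apply: contraNneq => /(congr1 (head (letter 0))) /= ->.
Qed.

Lemma cyc_up_infinite_order s p : acts_trivially (gpow (cyc_up s) p) -> p = 0.
Proof.
elim/ltn_ind: p s => p IH s up1; case: (posnP p) => [//|p_gt0].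
have n_gt0 : 0 < n by exact: ltnW.
have [n_p down1] := trivial_gpow_cycle n_gt0 (cyc_up_pow s) (cyc_up_pow_moves s) up1.
have down2 := trivial_section (eval_gpow_fixed (cyc_down_fix s.+1) (p %/ n)) down1.
have [n_q up2] := trivial_gpow_cycle n_gt0 (cyc_down_pow s.+2) (cyc_down_pow_moves s.+2) down2.
have q_lt : p %/ n %/ n < p := leq_ltn_trans (leq_div _ _) (ltn_Pdiv n_gt1 p_gt0).
by rewrite -(divnK n_p) -(divnK n_q) (IH _ q_lt _ up2).
Qed.

End CyclicProducts.

Theorem theorem3p4 (d : nat) (hd : 3 <= d) :
  ~ exists S : seq (gword d),
      forall g : gword d, exists k : nat,
        forall u : vertex d, k <= size u ->
          exists2 s, s \in S & forall v : vertex d,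
            section (eval g) u v = eval s v.
Proof.
case: d hd => [//|n] n_gt1.
apply: (not_contracting_with (@cyc_up_fix n 0)).
exact: cyc_up_infinite_order.
Qed.
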